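(* For every integer $q'\ge2$, the network $\mathcal{N}_2$ (with parameter $q'$) has no scalar linear network coding (1-dimensional VLNC) solution over any finite field.
   Context: Vector linear network coding: each source $v$ generates $x_v\in F^d$; an edge out of a source $v$ carries $Ax_v$ for a $d\times d$ matrix $A$ over $F$; an edge out of an intermediate node carries $\sum A_{e',e}y_{e'}$ over the edges $e'$ entering that node; a terminal computes vectors $\sum B_ey_e$ over its incoming edges; a $d$-dimensional VLNC solution over $F$ is such a code with which every terminal computes each demanded message for all message choices. The Char-$q$-$s$ network (integer $q\ge2$): sources $s,x_1,\dots,x_{q+2}$; intermediate nodes $m_1,\dots,m_{q+3},n_1,\dots,n_{q+3}$; terminals $r_1,\dots,r_{q+3}$; edges: $(x_1,m_i)$ for $1\le i\le q+1$; $(s,m_1)$ and $(s,m_i)$ for $4\le i\le q+3$; $(x_i,m_j)$ for $2\le i,j\le q+2$, $i\ne j$; $(x_i,m_{q+3})$ for $1\le i\le q+2$; $e_i=(m_i,n_i)$ for $1\le i\le q+3$; $(n_i,r_i)$ for $1\le i\le q+2$; $(n_{q+3},r_i)$ and $(n_i,r_{q+3})$ for $1\le i\le q+2$; $(x_i,r_1)$ for $2\le i\le q+1$; $(x_1,r_{q+2})$; $(s,r_2)$; $(s,r_3)$. Demands: $r_1$ demands $x_{q+2}$; $r_i$ demands $x_i$ for $2\le i\le q+2$; $r_{q+3}$ demands $x_1$; no terminal demands $s$. The generalized M-network $\mathcal{M}_3$: sources in three groups $G_1=(\bar a,\bar b,\bar c)$, $G_2=(\bar r,\bar s,\bar w)$,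 $G_3=(\bar x,\bar y,\bar z)$; intermediate nodes $\bar u_1,\bar u_2,\bar u_3,\bar v_1,\dots,\bar v_5$; edges from each source of $G_i$ to $\bar u_i$, edges $(\bar u_i,\bar v_i),(\bar u_i,\bar v_4),(\bar u_i,\bar v_5)$ for $i=1,2,3$, and $(\bar v_i,\bar t_j)$ for $1\le i\le5$, $1\le j\le27$; terminals $\bar t_1,\dots,\bar t_{27}$, where $\bar t_j$ demands the $j$-th triple in the lexicographic order of $G_1\times G_2\times G_3$ (e.g. $\bar t_1$: $\bar a,\bar r,\bar x$; $\bar t_2$: $\bar a,\bar r,\bar y$; $\bar t_4$: $\bar a,\bar s,\bar x$; $\bar t_{25}$: $\bar c,\bar w,\bar x$; $\bar t_{27}$: $\bar c,\bar w,\bar z$). The network $\mathcal{N}_2$ (integer $q'\ge2$) is obtained from the disjoint union of $\mathcal{M}_3$ and a copy of the Char-$q'$-$s$ network (nodes renamed $\bar m_i,\bar n_i$, terminals $\rho_i$, edges $\bar e_i=(\bar m_i,\bar n_i)$, sources $x_i$ renamed $\bar x_i$ for $2\le i\le q'+2$) by identifying $x_1$ with $\bar a$ and $s$ with $\bar x$ (so $\rho_{q'+3}$ demands $\bar a$), and adding the edges: $(\bar w,\bar t_j)$ for $j\in\{7,8,9,16,17,18\}$; $(\bar c,\bar t_j)$ for $19\le j\le24$; $(\bar a,\bar t_{25})$; $(\bar y,\bar t_{26})$; $(\bar n_1,\bar t_{25})$. All other demands are unchanged. *)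

From HB Require Import structures.
From mathcomp Require Import all_boot all_order all_algebra.
Set Implicit Arguments. Unset Strict Implicit. Unset Printing Implicit Defensive.
Import GRing.Theory.
Local Open Scope ring_scope.

(* A network over node type T: a list of directed edges (tail, head),        *)
(* a list of source nodes, and the demands of each node (terminals are the  *)
(* nodes with a nonempty demand list).  Edges are indexed by their position *)
(* in the edge list.                                                        *)
Record network (T : eqType) := Network {
  net_edges : seq (T * T);
  net_sources : seq T;
  net_demands : T -> seq T
}.

Section VLNC.
Variables (T : eqType) (N : network T).

Definition edge_idx := 'I_(size (net_edges N)).
Definition etail (e : edge_idx) : T := (tnth (in_tuple (net_edges N)) e).1.
Definition ehead (e : edge_idx) : T := (tnth (in_tuple (net_edges N)) e).2.
Definition in_edges (v : T) : seq edge_idx :=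
  [seq e <- enum 'I_(size (net_edges N)) | ehead e == v].

(* A d-dimensional VLNC solution over F.  A message choice is x : T -> F^d  *)
(* (only the values at sources matter).  Y e x is the vector carried by the *)
(* edge e under the message choice x:                                        *)
Definition VLNC_solution (F : fieldType) (d : nat) : Prop :=
  exists (A : edge_idx -> 'M[F]_d)
         (K : edge_idx -> edge_idx -> 'M[F]_d)
         (B : T -> T -> edge_idx -> 'M[F]_d)
         (Y : edge_idx -> (T -> 'cV[F]_d) -> 'cV[F]_d),
  [/\ forall (e : edge_idx) (x : T -> 'cV[F]_d), etail e \in net_sources N ->
        Y e x = A e *m x (etail e),
      forall (e : edge_idx) (x : T -> 'cV[F]_d), etail e \notin net_sources N ->
        Y e x = \sum_(e' <- in_edges (etail e)) K e' e *m Y e' x &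
      forall (t w : T) (x : T -> 'cV[F]_d), w \in net_demands N t ->
        \sum_(e <- in_edges t) B t w e *m Y e x = x w].

Definition scalar_linear_solution (F : fieldType) : Prop := VLNC_solution F 1.
End VLNC.

(* Nodes of the Char-q-s copy: x_1 is identified with a (nA), s with x (nX), *)
(* xbar_i (2<=i<=q+2), mbar_i, nbar_i, rho_i (1<=i<=q+3).                    *)
Inductive node :=
  | nA | nB | nC | nR | nS | nW | nX | nY | nZ
  | nU of nat | nV of nat | nT of nat
  | nXb of nat | nMb of nat | nNb of nat | nRho of nat.

Lemma node_eq_dec : forall x y : node, {x = y} + {x <> y}.
Proof. decide equality; exact: (eq_comparable _ _). Defined.

HB.instance Definition _ := comparableMixin node_eq_dec.

Definition G1 : seq node := [:: nA; nB; nC].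
Definition G2 : seq node := [:: nR; nS; nW].
Definition G3 : seq node := [:: nX; nY; nZ].

Definition triples : seq (node * (node * node)) :=
  [seq (a, rx) | a <- G1, rx <- [seq (r, x) | r <- G2, x <- G3]].

Definition demand_T (j : nat) : seq node :=
  if (1 <= j <= 27)%N then
    let p := nth (nA, (nA, nA)) triples j.-1 in [:: p.1; p.2.1; p.2.2]
  else [::].

(* Char-q-s with x_1 := a, s := x, x_i := xbar_i, m_i := mbar_i,
   n_i := nbar_i, r_i := rho_i *)
Definition char_edges (q : nat) : seq (node * node) :=
  [seq (nA, nMb i) | i <- iota 1 (q + 1)] ++
  (nX, nMb 1) :: [seq (nX, nMb i) | i <- iota 4 q] ++
  [seq (nXb ij.1, nMb ij.2)
     | ij <- [seq (i, j) | i <- iota 2 (q + 1), j <- iota 2 (q + 1)]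
     & ij.1 != ij.2] ++
  (nA, nMb (q + 3)) :: [seq (nXb i, nMb (q + 3)) | i <- iota 2 (q + 1)] ++
  [seq (nMb i, nNb i) | i <- iota 1 (q + 3)] ++
  [seq (nNb i, nRho i) | i <- iota 1 (q + 2)] ++
  [seq (nNb (q + 3), nRho i) | i <- iota 1 (q + 2)] ++
  [seq (nNb i, nRho (q + 3)) | i <- iota 1 (q + 2)] ++
  [seq (nXb i, nRho 1) | i <- iota 2 q] ++
  [:: (nA, nRho (q + 2)); (nX, nRho 2); (nX, nRho 3)].

Definition M3_edges : seq (node * node) :=
  [seq (g, nU 1) | g <- G1] ++ [seq (g, nU 2) | g <- G2] ++
  [seq (g, nU 3) | g <- G3] ++
  flatten [seq [:: (nU i, nV i); (nU i, nV 4); (nU i, nV 5)] | i <- iota 1 3] ++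
  [seq (nV i, nT j) | i <- iota 1 5, j <- iota 1 27].

Definition extra_edges : seq (node * node) :=
  [seq (nW, nT j) | j <- [:: 7; 8; 9; 16; 17; 18]%N] ++
  [seq (nC, nT j) | j <- iota 19 6] ++
  [:: (nA, nT 25); (nY, nT 26); (nNb 1, nT 25)].

Definition N2_sources (q : nat) : seq node :=
  [:: nA; nB; nC; nR; nS; nW; nX; nY; nZ] ++ [seq nXb i | i <- iota 2 (q + 1)].

Definition N2_demands (q : nat) (v : node) : seq node :=
  match v with
  | nT j => demand_T j
  | nRho i =>
      if i == 1%N then [:: nXb (q + 2)]
      else if (2 <= i <= q + 2)%N then [:: nXb i]
      else if i == (q + 3)%N then [:: nA]
      else [::]
  | _ => [::]
  end.

Definition N2 (q : nat) : network node :=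
  Network (M3_edges ++ char_edges q ++ extra_edges) (N2_sources q) (N2_demands q).

From mathcomp Require Import all_boot all_order all_algebra all_field.
From mathcomp Require Import ring zify.
Set Implicit Arguments. Unset Strict Implicit. Unset Printing Implicit Defensive.
Import GRing.Theory.

(* The network N_2 has no scalar linear solution; already its sub-network     *)
(* M_3 forbids one, over any field.            *)
(*   The edge u_k -> v_k (k = 1,2,3) carries a scalar zeta_k depending only on *)
(* the messages of the group G_k.  A terminal t_j demanding one message g_k    *)
(* from each group and fed only by v_1, ..., v_5 decodes each g_i as           *)
(*   g_i = sum_k c_{i,k} zeta_k + b_{i,4} y_4 + b_{i,5} y_5.                    *)
(* For each group pick a second message g'_k of G_k such that zeta_k(g'_k) is  *)
(* nonzero or zeta_k(g_k) is zero; combining the unit message choices g_k and  *)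
(* g'_k cancels the zeta_k-term and gives a vector P_k in F^2 with             *)
(* (b_{i,4}, b_{i,5}) . P_k = r_k [i = k] and r_k nonzero.  Thus a 3 x 2 matrix *)
(* times a 2 x 3 matrix would be an invertible diagonal matrix, contradicting  *)
(* the rank bound.  A suitable terminal exists among the eight t_j demanding   *)
(* from {a,b} x {r,s} x {x,y}, none of which receives an edge added in N_2.    *)

Definition is_char_node (v : node) : bool :=
  if v is (nMb _ | nNb _ | nRho _) then true else false.

(* Nodes all of whose incoming edges belong to M_3: the u_k, the v_k, and the   *)
(* terminals t_j that receive none of the edges added when gluing N_2.          *)
Definition M3_exclusive (v : node) : bool :=
  match v with
  | nU _ | nV _ => true
  | nT j => j \notin [:: 7; 8; 9; 16; 17; 18; 19; 20; 21; 22; 23; 24; 25; 26]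
  | _ => false
  end.

Lemma char_edges_heads q : all (fun p => is_char_node p.2) (char_edges q).
Proof.
by rewrite /char_edges; repeat first
  [ progress rewrite /= ?all_cat ?all_map | apply/andP; split | apply/allP => ? ].
Qed.

(* The message groups G_1, G_2, G_3 of M_3, indexed from 0. *)
Definition group (k : nat) : seq node := nth [::] [:: G1; G2; G3] k.

Definition group_of (g : node) : nat :=
  match g with nA | nB | nC => 0 | nR | nS | nW => 1 | _ => 2 end.

Lemma group_ofP g k : g \in group k -> group_of g = k.
Proof. by case: k => [|[|[|k]]]; rewrite /group /= ?nth_nil // !inE => /or3P [] /eqP ->. Qed.

Lemma size_group k : k < 3 -> size (group k) = 3.
Proof. by case: k => [|[|[|]]]. Qed.

Lemma uniq_group k : uniq (group k).
Proof. by case: k => [|[|[|k]]]; rewrite /group /= ?nth_nil. Qed.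

Section M3Edges.
Variable q : nat.

Definition rest_edges : seq (node * node) := char_edges q ++ extra_edges.

Lemma size_M3_edges : size M3_edges = 153.
Proof. by []. Qed.

Lemma N2_edges : net_edges (N2 q) = M3_edges ++ rest_edges.
Proof. by []. Qed.

Lemma nth_N2_edges_M3 i :
  i < 153 -> nth (nA, nA) (net_edges (N2 q)) i = nth (nA, nA) M3_edges i.
Proof. by move=> lt_i; rewrite N2_edges nth_cat size_M3_edges lt_i. Qed.

Lemma nth_N2_edges_rest i :
  153 <= i -> nth (nA, nA) (net_edges (N2 q)) i = nth (nA, nA) rest_edges (i - 153).
Proof. by move=> le_i; rewrite N2_edges nth_cat size_M3_edges ltnNge le_i. Qed.

Lemma size_N2_edges : size (net_edges (N2 q)) = 153 + size rest_edges.
Proof. by rewrite N2_edges size_cat size_M3_edges. Qed.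

Lemma N2_edges_pos : 0 < size (net_edges (N2 q)).
Proof. by rewrite size_N2_edges. Qed.

(* The i-th edge of N_2 (meaningful for i < 153, i.e. for the edges of M_3). *)
Definition E (i : nat) : edge_idx (N2 q) := insubd (Ordinal N2_edges_pos) i.

Lemma val_E i : i < 153 -> val (E i) = i.
Proof. by move=> lt_i; rewrite /E insubdK // size_N2_edges; lia. Qed.

Lemma etail_E i : i < 153 -> etail (E i) = (nth (nA, nA) M3_edges i).1.
Proof. by move=> lt_i; rewrite /etail (tnth_nth (nA, nA)) val_E // nth_N2_edges_M3. Qed.

Lemma rest_edges_avoid v p : M3_exclusive v -> p \in rest_edges -> p.2 != v.
Proof.
move=> excl_v; rewrite mem_cat => /orP [/(allP (char_edges_heads q)) char_p | extra_p].
  by apply: contraTneq char_p => ->; case: v excl_v.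
have extra_heads : all (fun p => ~~ M3_exclusive p.2) extra_edges by [].
by apply: contraTneq excl_v => <-; apply: (allP extra_heads).
Qed.

Lemma in_edges_M3 v : M3_exclusive v ->
  in_edges (N2 q) v = map E [seq i <- iota 0 153 | (nth (nA, nA) M3_edges i).2 == v].
Proof.
move=> excl_v; set l := filter _ _.
have l_small i : i \in l -> i < 153 by rewrite mem_filter mem_iota => /andP [].
apply: (inj_map val_inj); rewrite -map_comp (_ : map (val \o E) l = l); last first.
  by rewrite -[RHS]map_id; apply/eq_in_map => i /l_small /val_E.
rewrite /in_edges (eq_filter (a2 := preim val
  (fun i => (nth (nA, nA) (net_edges (N2 q)) i).2 == v))) => [|e]; last first.
  by rewrite /ehead (tnth_nth (nA, nA)).
rewrite -filter_map val_enum_ord size_N2_edges iotaD filter_cat.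
rewrite [X in _ ++ X](eq_in_filter (a2 := pred0)) ?filter_pred0 ?cats0; last first.
  move=> i; rewrite mem_iota => /andP [le_i lt_i] /=; rewrite nth_N2_edges_rest //.
  by apply/negbTE/rest_edges_avoid/mem_nth => //; rewrite ltn_subLR // -addnA.
by apply: eq_in_filter => i; rewrite mem_iota => /andP [_ /nth_N2_edges_M3 ->].
Qed.

Lemma group_sources g k : g \in group k -> g \in N2_sources q.
Proof.
by case: k => [|[|[|k]]]; rewrite /group /= ?nth_nil // !inE => /or3P [] /eqP ->.
Qed.

Lemma M3_internal_not_source k : nU k \notin N2_sources q /\ nV k \notin N2_sources q.
Proof. by rewrite !mem_cat /=; split; apply/mapP => -[]. Qed.

Lemma in_edges_U k :
  k < 3 -> in_edges (N2 q) (nU k.+1) = map E [seq 3 * k + i | i <- iota 0 3].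
Proof. by rewrite in_edges_M3 //; case: k => [|[|[|]]] // _; vm_compute. Qed.

Lemma etail_U_in k i : k < 3 -> i < 3 -> etail (E (3 * k + i)) = nth nA (group k) i.
Proof.
move=> lt_k lt_i; rewrite etail_E; last lia.
by move: lt_k lt_i; case: k => [|[|[|]]] //; case: i => [|[|[|]]].
Qed.

(* The edge u_{k+1} -> v_{k+1}, and the edge v_{k+1} -> t_j. *)
Definition UV_edge (k : nat) : edge_idx (N2 q) := E (9 + 3 * k).
Definition VT_edge (j k : nat) : edge_idx (N2 q) := E (17 + j + 27 * k).

Lemma in_edges_V k : k < 3 -> in_edges (N2 q) (nV k.+1) = [:: UV_edge k].
Proof. by rewrite in_edges_M3 //; case: k => [|[|[|]]] // _; vm_compute. Qed.

Lemma etail_V_in k : k < 3 -> etail (UV_edge k) = nU k.+1.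
Proof. by move=> lt_k; rewrite etail_E; [case: k lt_k => [|[|[|]]] | lia]. Qed.

Lemma in_edges_T j : 1 <= j <= 27 -> M3_exclusive (nT j) ->
  in_edges (N2 q) (nT j) = [seq VT_edge j k | k <- iota 0 5].
Proof.
move=> j_range excl_j; rewrite in_edges_M3 // /VT_edge.
rewrite (map_comp E (fun k => 17 + j + 27 * k)); congr map.
have in_T : all (fun j => [seq i <- iota 0 153 | (nth (nA, nA) M3_edges i).2 == nT j]
  == [seq 17 + j + 27 * k | k <- iota 0 5]) (iota 1 27) by vm_compute.
by apply/eqP/(allP in_T); rewrite mem_iota; lia.
Qed.

Lemma etail_T_in j k : 1 <= j <= 27 -> k < 5 -> etail (VT_edge j k) = nV k.+1.
Proof.
move=> j_range lt_k; rewrite etail_E; last lia.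
have tails : all (fun j => all (fun k => (nth (nA, nA) M3_edges (17 + j + 27 * k)).1
  == nV k.+1) (iota 0 5)) (iota 1 27) by vm_compute.
by apply/eqP/(allP (allP tails j _)); rewrite mem_iota; lia.
Qed.

End M3Edges.

Lemma demand_T_lex i0 i1 i2 : i0 < 3 -> i1 < 3 -> i2 < 3 ->
  demand_T (1 + 9 * i0 + 3 * i1 + i2)
  = [:: nth nA (group 0) i0; nth nA (group 1) i1; nth nA (group 2) i2].
Proof.
have lex : all (fun i0 => all (fun i1 => all (fun i2 =>
    demand_T (1 + 9 * i0 + 3 * i1 + i2)
    == [:: nth nA (group 0) i0; nth nA (group 1) i1; nth nA (group 2) i2])
  (iota 0 3)) (iota 0 3)) (iota 0 3) by vm_compute.
move=> lt_i0 lt_i1 lt_i2; apply/eqP.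
by apply: (allP (allP (allP lex i0 _) i1 _)); rewrite mem_iota.
Qed.

Lemma plain_terminal_exclusive i0 i1 i2 : i0 < 2 -> i1 < 2 -> i2 < 2 ->
  M3_exclusive (nT (1 + 9 * i0 + 3 * i1 + i2)).
Proof. by case: i0 => [|[|]] //; case: i1 => [|[|]] //; case: i2 => [|[|]]. Qed.

Section AlgebraicFacts.
Local Open Scope ring_scope.

Lemma low_rank_not_diagonal (F : fieldType) (m n : nat)
    (M : 'M[F]_(m, n)) (N : 'M[F]_(n, m)) (r : 'rV[F]_m) :
  (n < m)%N -> (forall i, r 0 i != 0) -> M *m N <> diag_mx r.
Proof.
move=> lt_nm r_neq0 MN.
have rank_diag : \rank (diag_mx r) = m.
  by apply: mxrank_unit; rewrite unitmxE det_diag unitfE; apply/prodf_neq0.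
have := leq_trans (mxrankM_maxr M N) (rank_leq_row N).
by rewrite MN rank_diag leqNgt lt_nm.
Qed.

(* Combination of two observations u (weight om of the bottleneck) and w       *)
(* (weight z) cancelling the bottleneck term, and the factor it scales by.     *)
Definition elim_comb (F : fieldType) (z om u w : F) :=
  if z != 0 then z * u - om * w else u.
Definition elim_scale (F : fieldType) (z : F) := if z != 0 then z else 1.

Lemma elim_scale_neq0 (F : fieldType) (z : F) : elim_scale z != 0.
Proof. by rewrite /elim_scale; case: ifPn => // _; exact: oner_neq0. Qed.

Lemma eliminate_bottleneck (F : fieldType) (n : nat) (b u w : 'I_n -> F)
    (c om z d : F) :
  z != 0 \/ om = 0 ->
  d = c * om + \sum_l b l * u l -> 0 = c * z + \sum_l b l * w l ->
  \sum_l b l * elim_comb z om (u l) (w l) = elim_scale z * d.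
Proof.
rewrite /elim_scale; case: ifPn => [z_neq0 _ du dw | /negPn/eqP z0 [/eqP//|om0] du _].
  have sum_u : \sum_l b l * u l = d - c * om by rewrite du [c * om + _]addrC addrK.
  have sum_w : \sum_l b l * w l = - (c * z) by apply/eqP; rewrite -addr_eq0 addrC -dw.
  under eq_bigr do rewrite /elim_comb z_neq0 mulrBr !mulrA ![b _ * _]mulrC -!mulrA.
  by rewrite sumrB -!mulr_sumr sum_u sum_w; ring.
rewrite (eq_bigr (fun l => b l * u l)) => [|l _]; last by rewrite /elim_comb z0 eqxx.
by rewrite mul1r du om0 mulr0 add0r.
Qed.

Lemma separating_pair (F : fieldType) (f : nat -> F) :
  exists p : nat * nat, [/\ (p.1 < 2)%N, (p.2 < 2)%N, p.2 != p.1 & f p.2 != 0 \/ f p.1 = 0].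
Proof.
by case: (eqVneq (f 0%N) 0) => f0;
  [exists (0, 1)%N; split => //; right | exists (1, 0)%N; split => //; left].
Qed.

End AlgebraicFacts.

Section ScalarSolution.
Local Open Scope ring_scope.
Variables (q : nat) (F : fieldType).
Variables (A : edge_idx (N2 q) -> 'M[F]_1)
  (K : edge_idx (N2 q) -> edge_idx (N2 q) -> 'M[F]_1)
  (B : node -> node -> edge_idx (N2 q) -> 'M[F]_1)
  (Y : edge_idx (N2 q) -> (node -> 'cV[F]_1) -> 'cV[F]_1).
Hypothesis Y_source : forall e x, etail e \in net_sources (N2 q) ->
  Y e x = A e *m x (etail e).
Hypothesis Y_internal : forall e x, etail e \notin net_sources (N2 q) ->
  Y e x = \sum_(e' <- in_edges (N2 q) (etail e)) K e' e *m Y e' x.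
Hypothesis decodes : forall t w x, w \in net_demands (N2 q) t ->
  \sum_(e <- in_edges (N2 q) t) B t w e *m Y e x = x w.

Lemma scalar_mulmx (M N : 'M[F]_1) : (M *m N) 0 0 = M 0 0 * N 0 0.
Proof. by rewrite mxE big_ord1. Qed.

Lemma Y_source_scalar e x : etail e \in N2_sources q ->
  Y e x 0 0 = A e 0 0 * x (etail e) 0 0.
Proof. by move=> src_e; rewrite Y_source // scalar_mulmx. Qed.

Lemma Y_internal_scalar e x : etail e \notin N2_sources q ->
  Y e x 0 0 = \sum_(e' <- in_edges (N2 q) (etail e)) K e' e 0 0 * Y e' x 0 0.
Proof.
move=> nsrc_e; rewrite Y_internal // summxE.
by apply: eq_bigr => e' _; rewrite scalar_mulmx.
Qed.

Definition zeta (k : nat) (x : node -> 'cV[F]_1) : F := Y (UV_edge q k) x 0 0.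

Definition delta (g : node) : node -> 'cV[F]_1 := fun v => const_mx (v == g)%:R.

Lemma deltaE g v : delta g v 0 0 = (v == g)%:R.
Proof. by rewrite mxE. Qed.

Lemma zeta_outside_group (k : nat) g :
  (k < 3)%N -> g \notin group k -> zeta k (delta g) = 0.
Proof.
move=> lt_k g_out; rewrite /zeta Y_internal_scalar etail_V_in //;
  last by case: (M3_internal_not_source q k.+1).
rewrite in_edges_U // !big_map big1_seq // => i /andP [_]; rewrite mem_iota => /= lt_i.
have nth_in : nth nA (group k) i \in group k by rewrite mem_nth ?size_group.
rewrite Y_source_scalar etail_U_in ?deltaE ?(group_sources q nth_in) //.
have -> : (nth nA (group k) i == g) = false by apply: contraNF g_out => /eqP <-.
by rewrite !mulr0.
Qed.

Lemma Y_through_V j k x : (1 <= j <= 27)%N -> (k < 3)%N ->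
  Y (VT_edge q j k) x 0 0 = K (UV_edge q k) (VT_edge q j k) 0 0 * zeta k x.
Proof.
move=> j_range lt_k; have [_ nsrc_V] := M3_internal_not_source q k.+1.
by rewrite Y_internal_scalar etail_T_in ?in_edges_V ?big_seq1 //; apply: ltn_trans lt_k _.
Qed.

(* Decoding coefficients at t_j: of zeta_k, and of the symbols carried by the  *)
(* two edges from v_4, v_5 (the "cut" of dimension 2).                          *)
Definition dec_coef j g (k : nat) : F :=
  B (nT j) g (VT_edge q j k) 0 0 * K (UV_edge q k) (VT_edge q j k) 0 0.
Definition cut_coef j g (l : nat) : F := B (nT j) g (VT_edge q j (3 + l)) 0 0.
Definition cut_value j (l : nat) (x : node -> 'cV[F]_1) : F :=
  Y (VT_edge q j (3 + l)) x 0 0.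

Lemma decode_plain j g (x : node -> 'cV[F]_1) :
  (1 <= j <= 27)%N -> M3_exclusive (nT j) -> g \in demand_T j ->
  x g 0 0 = \sum_(k < 3) dec_coef j g k * zeta k x
            + \sum_(l < 2) cut_coef j g l * cut_value j l x.
Proof.
move=> j_range excl_j g_dem.
rewrite -(decodes x (t := nT j) g_dem) in_edges_T // !big_map summxE.
rewrite (iotaD 0 3 2) big_cat add0n (iotaDl 3 0 2) big_map.
rewrite -[iota 0 3]/(index_iota 0 3) -[iota 0 2]/(index_iota 0 2) !big_mkord.
congr (_ + _); apply: eq_bigr => k _; rewrite scalar_mulmx //.
by rewrite Y_through_V // mulrA.
Qed.

Lemma decode_delta j g h (k : nat) :
  (1 <= j <= 27)%N -> M3_exclusive (nT j) -> g \in demand_T j ->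
  (k < 3)%N -> h \in group k ->
  (g == h)%:R = dec_coef j g k * zeta k (delta h)
                + \sum_(l < 2) cut_coef j g l * cut_value j l (delta h).
Proof.
move=> j_range excl_j g_dem lt_k h_in.
rewrite -deltaE (decode_plain _ j_range excl_j g_dem) (bigD1 (Ordinal lt_k)) //=.
rewrite big1 ?addr0 // => k' ne_k'; rewrite zeta_outside_group ?mulr0 //.
apply: contra ne_k' => /group_ofP; rewrite (group_ofP h_in) => eq_k.
by apply/eqP/val_inj.
Qed.

(* The core argument: a terminal fed only by v_1, ..., v_5, demanding gs k from *)
(* each group k, together with separating alternatives alt k, forces three      *)
(* independent vectors through the 2-dimensional cut.                           *)
Lemma plain_terminal_unsolvable j (gs alt : nat -> node) :
  (1 <= j <= 27)%N -> M3_exclusive (nT j) ->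
  (forall k, (k < 3)%N -> gs k \in demand_T j) ->
  (forall k, (k < 3)%N -> gs k \in group k) ->
  (forall k, (k < 3)%N -> alt k \in group k) ->
  (forall k, (k < 3)%N -> alt k != gs k) ->
  (forall k, (k < 3)%N -> zeta k (delta (alt k)) != 0 \/ zeta k (delta (gs k)) = 0) ->
  False.
Proof.
move=> j_range excl_j gs_dem gs_in alt_in alt_ne separating.
pose z k := zeta k (delta (alt k)).
pose P (l k : nat) := elim_comb (z k) (zeta k (delta (gs k)))
  (cut_value j l (delta (gs k))) (cut_value j l (delta (alt k))).
have biorthogonal (i k : 'I_3) :
    \sum_(l < 2) cut_coef j (gs i) l * P l k = elim_scale (z k) * (i == k)%:R.
  have gs_eq : (gs i == gs k) = (i == k).
    apply/eqP/eqP => [eq_gs | -> //]; apply: val_inj => /=.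
    by rewrite -(group_ofP (gs_in i (ltn_ord i))) eq_gs (group_ofP (gs_in k (ltn_ord k))).
  have gs_alt : (gs i == alt k) = false.
    apply/negbTE; case: (eqVneq i k) => [-> | ne_ik]; first by rewrite eq_sym alt_ne.
    apply: contra ne_ik => /eqP eq_ga; apply/eqP/val_inj => /=.
    by rewrite -(group_ofP (gs_in i (ltn_ord i))) eq_ga (group_ofP (alt_in k (ltn_ord k))).
  rewrite -gs_eq; apply: (eliminate_bottleneck (separating k (ltn_ord k))).
    exact: decode_delta (gs_dem i (ltn_ord i)) (ltn_ord k) (gs_in k (ltn_ord k)).
  have := decode_delta j_range excl_j (gs_dem i (ltn_ord i)) (ltn_ord k) (alt_in k (ltn_ord k)).
  by rewrite gs_alt.
apply: (low_rank_not_diagonal (M := \matrix_(i < 3, l < 2) cut_coef j (gs i) l)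
  (N := \matrix_(l < 2, k < 3) P l k) (r := \row_k elim_scale (z k))) => //.
  by move=> k; rewrite mxE elim_scale_neq0.
apply/matrixP => i k; rewrite !mxE.
under eq_bigr do rewrite !mxE.
by rewrite biorthogonal; case: eqVneq => [-> | _]; rewrite ?mulr1 ?mulr0.
Qed.

Lemma separating_indices : exists idx : nat -> nat * nat, forall k, (k < 3)%N ->
  [/\ ((idx k).1 < 2)%N, ((idx k).2 < 2)%N, (idx k).2 != (idx k).1
    & zeta k (delta (nth nA (group k) (idx k).2)) != 0
      \/ zeta k (delta (nth nA (group k) (idx k).1)) = 0].
Proof.
have [choice choiceP] := fin_all_exists (fun k : 'I_3 =>
  separating_pair (fun i => zeta k (delta (nth nA (group k) i)))).
by exists (fun k => choice (inord k)) => k lt_k; have := choiceP (inord k); rewrite inordK.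
Qed.

Lemma M3_obstruction : False.
Proof.
have [idx idxP] := separating_indices.
have nth_group k i : (k < 3)%N -> (i < 2)%N -> nth nA (group k) i \in group k.
  by move=> lt_k lt_i; rewrite mem_nth // size_group //; apply: ltn_trans lt_i _.
have [i0 _ _ _] := idxP 0%N isT; have [i1 _ _ _] := idxP 1%N isT.
have [i2 _ _ _] := idxP 2%N isT.
apply: (@plain_terminal_unsolvable (1 + 9 * (idx 0).1 + 3 * (idx 1).1 + (idx 2).1)%N
  (fun k => nth nA (group k) (idx k).1) (fun k => nth nA (group k) (idx k).2)).
- by lia.
- exact: plain_terminal_exclusive.
- rewrite demand_T_lex ?(ltn_trans _ (ltnSn 2)) //.
  by case=> [|[|[|]]] // _; rewrite !inE eqxx ?orbT.
- by move=> k lt_k; have [lt_i _ _ _] := idxP k lt_k; exact: nth_group.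
- by move=> k lt_k; have [_ lt_i _ _] := idxP k lt_k; exact: nth_group.
- move=> k lt_k; have [lt_i1 lt_i2 ne_i _] := idxP k lt_k.
  by rewrite nth_uniq ?uniq_group ?size_group //; lia.
- by move=> k lt_k; have [_ _ _ sep] := idxP k lt_k.
Qed.

End ScalarSolution.

Theorem lemma8 (q' : nat) (hq : (2 <= q')%N) (F : finFieldType) :
  ~ scalar_linear_solution (N2 q') F.
Proof.
case=> A [K [B [Y [Y_source Y_internal decodes]]]].
exact: (M3_obstruction Y_source Y_internal decodes).
Qed.
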